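(* Let $\mathsf{K}$ be a finite simplicial complex whose vertex set is a finite set $P\subset\mathbb{R}^d$, let $v\in\mathbb{R}^d$, and let $\zeta_1\prec_v\cdots\prec_v\zeta_s$ be the essential $p$-cycles of the filtration $\mathcal{D}_v(\mathsf{K})$ computed by the standard reduction algorithm. Let $\zeta$ be a $p$-cycle with $[\zeta]\neq 0$ in $H_p(\mathsf{K})$ such that $\zeta=\zeta_{i_1}+\cdots+\zeta_{i_m}+\partial c_{p+1}$ for some $(p+1)$-chain $c_{p+1}$ and indices $i_1<\cdots<i_m$ in $\{1,\dots,s\}$. Then $r_v([\zeta])=r_v(\zeta_{i_m})$, where $r_v([\zeta]):=\min_{\xi\in[\zeta]} r_v(\xi)$. In particular, $\zeta_{i_1}+\cdots+\zeta_{i_m}\in\arg\min_{\xi\in[\zeta]} r_v(\xi)$.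
   Context: All homology is with $\mathbb{Z}_2$ coefficients; chains are identified with their supports (sets of simplices). For a simplex $\sigma$ of $\mathsf{K}$ and $v\in\mathbb{R}^d$, $r_v(\sigma)=\max_{x\text{ vertex of }\sigma}\|v-x\|_2$; for a nonzero chain $\zeta$, $r_v(\zeta)=\max_{\sigma\in\zeta}r_v(\sigma)$. The order $\prec_v$ is a fixed total order on the simplices of $\mathsf{K}$ such that $\sigma_1\prec_v\sigma_2$ whenever $\sigma_1$ is a proper face of $\sigma_2$ or $r_v(\sigma_1)<r_v(\sigma_2)$ (remaining ties broken arbitrarily). For a nonzero chain $\zeta$, $\kappa(\zeta)$ is the $\prec_v$-largest simplex in its support, and chains are compared by $\zeta\prec_v\zeta'$ iff $\kappa(\zeta)\prec_v\kappa(\zeta')$; note $r_v(\zeta)=r_v(\kappa(\zeta))$. $\mathcal{D}_v(\mathsf{K})$ is the simplexwise filtration adding the simplices $\sigma_1\prec_v\sigma_2\prec_v\cdots\prec_v\sigma_N$ one at a time. Standard reduction: let $\partial$ be the $N\times N$ $\mathbb{Z}_2$ boundary matrix (column $j$ is the boundary of $\sigma_j$, rows and columns in filtration order), $low(j)$ the row index of the lowest $1$ in column $j$ (undefined if the column is zero). Start with $V=I_N$; for $j=1,\dots,N$, while there is $j_0<j$ with $low(j_0)=low(j)$, add column $j_0$ to column $j$ of $\partial$ and column $j_0$ of $V$ to column $j$ of $V$. Let $R$ be the resulting reduced matrix. An index $i$ is paired if $i=low(j)$ for some nonzero column $R_j$, or if $R_i\neq0$. The essential $p$-cycles are the columns $V_i$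 (viewed as chains) for indices $i$ such that $\sigma_i$ is a $p$-simplex, $R_i=0$, and $i$ is not paired; each such $V_i$ is a cycle with $\kappa(V_i)=\sigma_i$, and their classes form a basis of $H_p(\mathsf{K})$. *)

From mathcomp Require Import all_boot all_order all_algebra.
Set Implicit Arguments. Unset Strict Implicit. Unset Printing Implicit Defensive.
Import Order.TTheory GRing.Theory Num.Theory.

(* Vertices: a finType V embedded (injectively) into R^d by pos; the vertex
   set P of the paper is the image of pos.  A simplex is a nonempty
   {set V}; a chain over Z_2 is identified with its support, a
   {set {set V}}.  A p-simplex has p+1 vertices. *)

Section Defs.
Variables (R : rcfType) (d : nat) (V : finType).
Local Open Scope ring_scope.

(* Z_2 addition of chains = symmetric difference *)
Definition symd (A B : {set {set V}}) : {set {set V}} := (A :\: B) :|: (B :\: A).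

Definition bd (c : {set {set V}}) : {set {set V}} :=
  [set t : {set V} | (0 < #|t|)%N &&
     odd #|[set s in c | (t \subset s) && (#|s| == #|t|.+1)%N]| ].

Definition is_complex (K : {set {set V}}) : Prop :=
  [/\ (forall s : {set V}, s \in K -> s != set0),
      (forall s t : {set V}, s \in K -> t \subset s -> t != set0 -> t \in K) &
      (forall x : V, [set x] \in K)].

(* the p-simplices of K; p-chains of K are the subsets of this set *)
Definition psimp (K : {set {set V}}) (p : nat) : {set {set V}} :=
  [set s in K | #|s| == p.+1]%N.

Definition dist (x y : 'rV[R]_d) : R :=
  Num.sqrt (\sum_(i < d) (x ord0 i - y ord0 i) ^+ 2).

Definition rsimp (pos : V -> 'rV[R]_d) (v : 'rV[R]_d) (s : {set V}) : R :=
  \big[Num.max/0]_(x in s) dist v (pos x).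

Definition rchain (pos : V -> 'rV[R]_d) (v : 'rV[R]_d) (c : {set {set V}}) : R :=
  \big[Num.max/0]_(s in c) rsimp pos v s.

(* The order prec_v is given as the enumeration ord = [sigma_1; ...; sigma_N]
   of the simplices of K (0-based positions), required to list K without
   repetition and to be compatible with proper faces and with r_v. *)
Definition valid_order (pos : V -> 'rV[R]_d) (v : 'rV[R]_d)
    (K : {set {set V}}) (ord : seq {set V}) : Prop :=
  [/\ uniq ord, (forall s : {set V}, (s \in ord) = (s \in K)) &
      (forall a b : {set V}, a \in ord -> b \in ord ->
         (a \proper b) || (rsimp pos v a < rsimp pos v b) ->
         (index a ord < index b ord)%N)].

Definition hclass (K : {set {set V}}) (p : nat) (z : {set {set V}})
  : {set {set {set V}}} :=
  [set xi | [exists c : {set {set V}},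
               (c \subset psimp K p.+1) && (xi == symd z (bd c))]].

(* r_v([zeta]) = min over xi in [zeta] of r_v(xi) (zeta itself is in the
   class, so it serves as seed of the finite minimum) *)
Definition rclass (pos : V -> 'rV[R]_d) (v : 'rV[R]_d)
    (K : {set {set V}}) (p : nat) (z : {set {set V}}) : R :=
  \big[Num.min/rchain pos v z]_(xi in hclass K p z) rchain pos v xi.

Section Reduction.
Variable ord : seq {set V}.

(* position (0-based row index) of the lowest one of a nonzero column *)
Definition lowi (c : {set {set V}}) : nat := \max_(s in c) index s ord.

(* index j0 < j of an earlier column with the same low, or j if none *)
Definition pivot (Rp : nat -> {set {set V}}) (j : nat) (r : {set {set V}}) : nat :=
  find (fun j0 => [&& Rp j0 != set0, r != set0 & lowi (Rp j0) == lowi r])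
       (iota 0 j).

(* the while loop for column j (fuel = N suffices: the low strictly drops) *)
Fixpoint reduce_col (fuel : nat) (Rp Vp : nat -> {set {set V}}) (j : nat)
    (r w : {set {set V}}) : {set {set V}} * {set {set V}} :=
  match fuel with
  | 0 => (r, w)
  | fuel'.+1 =>
      let k := pivot Rp j r in
      if (k < j)%N then reduce_col fuel' Rp Vp j (symd r (Rp k)) (symd w (Vp k))
      else (r, w)
  end.

Definition sigma (j : nat) : {set V} := nth set0 ord j.

Fixpoint reduce (n : nat) : (nat -> {set {set V}}) * (nat -> {set {set V}}) :=
  match n with
  | 0 => (fun _ => set0, fun _ => set0)
  | n'.+1 =>
      let RV := reduce n' in
      let rw := reduce_col (size ord) RV.1 RV.2 n' (bd [set sigma n'])
                           [set sigma n'] in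
      (fun i => if i == n' then rw.1 else RV.1 i,
       fun i => if i == n' then rw.2 else RV.2 i)
  end.

Definition Rmat : nat -> {set {set V}} := (reduce (size ord)).1.
Definition Vmat : nat -> {set {set V}} := (reduce (size ord)).2.

Definition paired (i : nat) : bool :=
  has (fun j => (Rmat j != set0) && (lowi (Rmat j) == i)) (iota 0 (size ord))
  || (Rmat i != set0).

Definition essential_idx (p : nat) : seq nat :=
  [seq i <- iota 0 (size ord) |
     [&& #|sigma i| == p.+1, Rmat i == set0 & ~~ paired i]].

(* zeta_{k+1} of the paper (0-based k), ordered by prec_v *)
Definition ess_cycle (p k : nat) : {set {set V}} :=
  Vmat (nth 0 (essential_idx p) k).

End Reduction.
End Defs.

From Pilot Require Import Defs.
From mathcomp Require Import all_boot all_order all_algebra.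
Set Implicit Arguments. Unset Strict Implicit. Unset Printing Implicit Defensive.
Import Order.TTheory GRing.Theory Num.Theory.

(* The reduction keeps two invariants: each column [V_j] is supported on
   [sigma_1, ..., sigma_j] and contains [sigma_j], with [R_j = bd V_j]; and the
   nonzero columns of [R] have pairwise distinct lows.  Let [e] be the
   filtration index of the last essential cycle in the sum [Z].  Then [Z] is
   supported up to [e] and contains [sigma_e], so [r_v(Z) = r_v(sigma_e)],
   which is also [r_v] of that essential cycle.  Any other representative is
   [Z + bd b]; writing [b] in the triangular basis [V], its boundary [X] is a
   sum of [R] columns.  If [sigma_e] is not in [X] it survives in [Z + X];
   otherwise the largest low of the columns in [X] is a simplex of [X] above
   [e] (it is not [e] since [e] is unpaired), and it survives as well.  Either
   way [r_v(Z + X) >= r_v(sigma_e)]. *)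

Section ChainAlgebra.
Variable V : finType.
Implicit Types A B C : {set {set V}}.

Definition chain_sum (I : Type) (F : I -> {set {set V}}) (s : seq I) :
  {set {set V}} := foldr (@symd V) set0 [seq F i | i <- s].

Lemma in_symd A B x : (x \in symd A B) = (x \in A) (+) (x \in B).
Proof. by rewrite !inE; case: (x \in A); case: (x \in B). Qed.

Lemma symd0 A : symd A set0 = A.
Proof. by apply/setP=> x; rewrite in_symd inE addbF. Qed.

Lemma symdC A B : symd A B = symd B A.
Proof. by apply/setP=> x; rewrite !in_symd addbC. Qed.

Lemma symdA A B C : symd A (symd B C) = symd (symd A B) C.
Proof. by apply/setP=> x; rewrite !in_symd addbA. Qed.

Lemma symdK A B : symd (symd A B) B = A.
Proof. by apply/setP=> x; rewrite !in_symd addbK. Qed.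

Lemma chain_sum_cons (I : Type) (F : I -> {set {set V}}) i (s : seq I) :
  chain_sum F (i :: s) = symd (F i) (chain_sum F s).
Proof. by []. Qed.

Lemma in_chain_sum (I : Type) (F : I -> {set {set V}}) (s : seq I) x :
  (x \in chain_sum F s) = odd (count (fun i => x \in F i) s).
Proof.
elim: s => [|i s IH] /=; first by rewrite inE.
by rewrite in_symd IH oddD; case: (x \in F i).
Qed.

Lemma odd_card_symd (T : finType) (A B : {set T}) :
  odd #|(A :\: B) :|: (B :\: A)| = odd #|A| (+) odd #|B|.
Proof.
have disjAB : (A :\: B) :&: (B :\: A) = set0.
  by apply/setP=> x; rewrite !inE; case: (x \in A); case: (x \in B).
have := cardsUI (A :\: B) (B :\: A); rewrite disjAB cards0 addn0 => ->.
rewrite -(cardsID B A) -(cardsID A B) setIC !oddD.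
by case: (odd #|B :&: A|); case: (odd _); case: (odd _).
Qed.

Lemma bd_symd A B : bd (symd A B) = symd (bd A) (bd B).
Proof.
apply/setP=> t; rewrite in_symd !inE; case: (0 < #|t|)%N => //=.
set Q := fun s : {set V} => (t \subset s) && (#|s| == #|t|.+1)%N.
have -> : [set s in symd A B | Q s] = symd [set s in A | Q s] [set s in B | Q s].
  by apply/setP=> s; rewrite !inE; case: (Q s); case: (s \in A); case: (s \in B).
exact: odd_card_symd.
Qed.

Lemma bd0 : bd (set0 : {set {set V}}) = set0.
Proof.
apply/setP=> t; rewrite !inE (_ : [set s in set0 | _] = set0) ?cards0 ?andbF //.
by apply/setP=> s; rewrite !inE.
Qed.

Lemma eq_in_chain_sum (I : eqType) (F G : I -> {set {set V}}) (s : seq I) :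
  {in s, F =1 G} -> chain_sum F s = chain_sum G s.
Proof. by move=> eFG; rewrite /chain_sum; congr foldr; apply/eq_in_map. Qed.

Lemma bd_chain_sum (I : Type) (F : I -> {set {set V}}) (s : seq I) :
  bd (chain_sum F s) = chain_sum (fun i => bd (F i)) s.
Proof. by elim: s => [|i s IH] /=; rewrite ?bd0 // bd_symd IH. Qed.

End ChainAlgebra.

Lemma leq_last_sorted (s : seq nat) x : sorted ltn s -> x \in s -> (x <= last 0 s)%N.
Proof.
case/lastP: s => // s a; rewrite last_rcons mem_rcons inE.
rewrite -rev_sorted rev_rcons /= path_sortedE; last first.
  by move=> ? ? ? lt1 lt2; apply: ltn_trans lt2 lt1.
rewrite all_rev => /andP[/allP lt_a _] /predU1P[-> // | xs].
exact: ltnW (lt_a x xs).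
Qed.

Lemma exists_argmax_seq (T : eqType) (s : seq T) (f : T -> nat) : s != [::] ->
  exists2 a, a \in s & forall b, b \in s -> (f b <= f a)%N.
Proof.
elim: s => [//|a [|b s] IH] _; first by exists a => [|x]; rewrite ?mem_seq1 // => /eqP ->.
have [c cs max_c] := IH isT.
have [le_ca | lt_ac] := leqP (f c) (f a).
  exists a => [|x]; first exact: mem_head.
  by rewrite inE => /predU1P[-> // | /max_c /leq_trans]; apply.
exists c => [|x]; first by rewrite inE cs orbT.
by rewrite inE => /predU1P[-> | /max_c //]; apply: ltnW.
Qed.

Section Reduction.
Variables (V : finType) (K : {set {set V}}) (ord : seq {set V}).
Hypothesis K_complex : is_complex K.
Hypothesis ord_uniq : uniq ord.
Hypothesis mem_ord : forall s, (s \in ord) = (s \in K).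
Implicit Types A B r w : {set {set V}}.
Local Notation N := (size ord).
Local Notation sigma := (sigma ord).
Local Notation lowi := (lowi ord).
Local Notation Rm := (Rmat ord).
Local Notation Vm := (Vmat ord).

Lemma index_sigma j : (j < N)%N -> index (sigma j) ord = j.
Proof. by move=> jN; rewrite index_uniq. Qed.

Lemma sigma_in j : (j < N)%N -> sigma j \in ord.
Proof. exact: mem_nth. Qed.

Lemma index_sigmaP x j : (j < N)%N -> (index x ord == j) = (x == sigma j).
Proof.
move=> jN; apply/eqP/eqP=> [ej | ->]; last exact: index_sigma.
by rewrite -ej /Defs.sigma nth_index // -index_mem ej.
Qed.

Lemma bd_sub_ord A : {subset A <= ord} -> {subset bd A <= ord}.
Proof.
move=> A_ord t; rewrite inE => /andP[t_gt0 /odd_gt0/card_gt0P[s]].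
rewrite !inE => /and3P[sA ts _].
case: K_complex => _ K_face _; rewrite mem_ord (K_face s) -?mem_ord ?A_ord //.
by rewrite -card_gt0.
Qed.

Definition supp_le k A := {in A, forall x, (index x ord <= k)%N}.

Lemma supp_le_sub_ord k A : (k < N)%N -> supp_le k A -> {subset A <= ord}.
Proof. by move=> kN Ak x /Ak xk; rewrite -index_mem (leq_ltn_trans xk). Qed.

Lemma supp_leW k l A : (k <= l)%N -> supp_le k A -> supp_le l A.
Proof. by move=> kl Ak x /Ak /leq_trans; apply. Qed.

Lemma index_le_lowi A x : x \in A -> (index x ord <= lowi A)%N.
Proof. exact: leq_bigmax_cond. Qed.

Lemma lowi_attained A : A != set0 -> exists2 x, x \in A & index x ord = lowi A.
Proof.
rewrite -card_gt0 => A_gt0.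
have [x xA low_x] := eq_bigmax_cond (fun s => index s ord) A_gt0.
by exists x; rewrite // /Defs.lowi low_x.
Qed.

Lemma lowi_lt_size A : {subset A <= ord} -> A != set0 -> (lowi A < N)%N.
Proof. by move=> A_ord /lowi_attained[x /A_ord xo <-]; rewrite index_mem. Qed.

Lemma sigma_lowi_in A : {subset A <= ord} -> A != set0 -> sigma (lowi A) \in A.
Proof.
move=> A_ord A0; have [x xA ex] := lowi_attained A0.
by rewrite -(eqP (_ : x == sigma (lowi A))) // -index_sigmaP ?ex // lowi_lt_size.
Qed.

Definition low_rank A := if A == set0 then 0%N else (lowi A).+1.

Lemma low_rank_le A : {subset A <= ord} -> (low_rank A <= N)%N.
Proof. by rewrite /low_rank; case: eqP => // /eqP A0 A_ord; apply: lowi_lt_size. Qed.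

Lemma low_rank_symd r B : {subset r <= ord} -> {subset B <= ord} ->
  r != set0 -> B != set0 -> lowi B = lowi r -> (low_rank (symd r B) < low_rank r)%N.
Proof.
move=> r_ord B_ord r0 B0 same_low; rewrite /low_rank (negPf r0).
case: eqP => // /eqP rB0; rewrite ltnS.
have [x xrB <-] := lowi_attained rB0.
have x_le : (index x ord <= lowi r)%N.
  case xr: (x \in r); first exact: index_le_lowi.
  by rewrite -same_low index_le_lowi //; move: xrB; rewrite in_symd xr.
rewrite ltn_neqAle x_le andbT index_sigmaP ?lowi_lt_size //.
apply: contraTneq xrB => ->.
by rewrite in_symd sigma_lowi_in // -same_low sigma_lowi_in.
Qed.

Definition reduced_col (Rp Vp : nat -> {set {set V}}) k :=
  [/\ Rp k = bd (Vp k), supp_le k (Vp k) & sigma k \in Vp k].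

Lemma reduced_col_sub_ord Rp Vp k : (k < N)%N -> reduced_col Rp Vp k ->
  {subset Rp k <= ord}.
Proof. by move=> kN [-> /supp_le_sub_ord Vk _]; apply/bd_sub_ord/Vk. Qed.

Lemma pivot_lt Rp j r : (pivot ord Rp j r < j)%N ->
  [&& Rp (pivot ord Rp j r) != set0, r != set0 &
      lowi (Rp (pivot ord Rp j r)) == lowi r].
Proof.
rewrite /pivot => lt_j.
have has_pivot := lt_j; rewrite -[X in (_ < X)%N](size_iota 0 j) -has_find in has_pivot.
by have := nth_find 0 has_pivot; rewrite nth_iota.
Qed.

Lemma pivot_ge Rp j r : ~~ (pivot ord Rp j r < j)%N ->
  forall k, (k < j)%N -> Rp k != set0 -> r != set0 -> lowi (Rp k) != lowi r.
Proof.
rewrite /pivot -[X in (_ < X)%N](size_iota 0 j) -has_find => /hasPn no_pivot k kj Rk0 r0.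
by have := no_pivot k; rewrite mem_iota kj Rk0 r0 => /(_ isT).
Qed.

Lemma reduce_col_spec fuel Rp Vp j r w : (j < N)%N ->
  (forall k, (k < j)%N -> reduced_col Rp Vp k) ->
  r = bd w -> supp_le j w -> sigma j \in w -> (low_rank r <= fuel)%N ->
  let rw := reduce_col ord fuel Rp Vp j r w in
  [/\ rw.1 = bd rw.2, supp_le j rw.2, sigma j \in rw.2 &
     forall k, (k < j)%N -> Rp k != set0 -> rw.1 != set0 ->
       lowi (Rp k) != lowi rw.1].
Proof.
move=> jN cols; elim: fuel r w => [|fuel IH] r w rw wj sj rank_r /=.
  by split=> // k _ _; move: rank_r; rewrite /low_rank; case: eqP => // ->.
have r_ord : {subset r <= ord} by rewrite rw; apply/bd_sub_ord/(supp_le_sub_ord jN).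
case: ifPn => [kj | /pivot_ge no_pivot]; last by split.
have /and3P[Rk0 r0 /eqP same_low] := pivot_lt kj.
set k := pivot ord Rp j r in kj Rk0 same_low *.
have [Rk Vk sk] := cols k kj.
apply: IH.
- by rewrite bd_symd rw Rk.
- move=> x; rewrite in_symd; case xw: (x \in w) => /=; first by move=> _; apply: wj.
  exact: supp_leW (ltnW kj) Vk x.
- rewrite in_symd sj /=; apply/negP => /Vk.
  by rewrite index_sigma // leqNgt kj.
- rewrite -ltnS (leq_trans _ rank_r) // low_rank_symd //.
  exact: reduced_col_sub_ord (ltn_trans kj jN) (cols k kj).
Qed.

Definition reduction_inv n (RV : (nat -> {set {set V}}) * (nat -> {set {set V}})) :=
  (forall k, (k < n)%N -> reduced_col RV.1 RV.2 k) /\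
  (forall k k', (k < k' < n)%N -> RV.1 k != set0 -> RV.1 k' != set0 ->
     lowi (RV.1 k) != lowi (RV.1 k')).

Lemma reduce_inv n : (n <= N)%N -> reduction_inv n (reduce ord n).
Proof.
elim: n => [|n IH] nN; first by split=> k // k'; rewrite ltn0 andbF.
have [cols lows] := IH (ltnW nN).
have sn_supp : supp_le n [set sigma n].
  by move=> x; rewrite inE => /eqP ->; rewrite index_sigma.
have rank_bd : (low_rank (bd [set sigma n]) <= N)%N.
  by apply/low_rank_le/bd_sub_ord => x; rewrite inE => /eqP ->; apply: sigma_in.
have [Rn Vn sn new_low] := reduce_col_spec nN cols erefl sn_supp (set11 _) rank_bd.
split=> [k | k k'] /=.
  rewrite ltnS leq_eqVlt => /predU1P[-> | kn]; first by rewrite /reduced_col eqxx.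
  by rewrite /reduced_col (ltn_eqF kn); apply: cols.
rewrite andbC => /andP[]; rewrite ltnS [(k' <= n)%N]leq_eqVlt.
move=> /predU1P[-> | k'n] kk' /=.
  by rewrite eqxx (ltn_eqF kk'); apply: new_low.
by rewrite (ltn_eqF k'n) (ltn_eqF (ltn_trans kk' k'n)); apply: lows; rewrite kk'.
Qed.

Lemma reduced_Rmat k : (k < N)%N -> reduced_col Rm Vm k.
Proof. by have [cols _] := reduce_inv (leqnn N); apply: cols. Qed.

Lemma Rmat_sub_ord k : (k < N)%N -> {subset Rm k <= ord}.
Proof. by move=> kN; apply/reduced_col_sub_ord/reduced_Rmat. Qed.

Lemma lowi_Rmat_inj k k' : (k < N)%N -> (k' < N)%N -> k != k' ->
  Rm k != set0 -> Rm k' != set0 -> lowi (Rm k) != lowi (Rm k').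
Proof.
have [_ lows] := reduce_inv (leqnn N).
move=> kN k'N; rewrite neq_ltn => /orP[kk' | k'k] Rk0 Rk'0.
  by apply: lows; rewrite ?kk'.
by rewrite eq_sym; apply: lows; rewrite ?k'k.
Qed.

Lemma lowi_Rmat_unpaired e k : ~~ paired ord e -> (k < N)%N -> Rm k != set0 ->
  lowi (Rm k) != e.
Proof.
rewrite /paired negb_or => /andP[/hasPn no_pair _] kN Rk0.
by have := no_pair k; rewrite mem_iota kN Rk0 eq_sym => /(_ isT).
Qed.

(* [V] is triangular with [sigma_j] on the diagonal, so it spans all chains. *)
Lemma Vmat_span k A : (k <= N)%N -> {in A, forall x, index x ord < k}%N ->
  exists J : seq nat,
    [/\ uniq J, all (fun j => j < k)%N J & A = chain_sum Vm J].
Proof.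
elim: k A => [|k IH] A kN A_lt.
  exists [::]; split=> //; apply/setP => x; rewrite inE.
  by apply/negP => /A_lt.
have [Vk Vk_supp sk] := reduced_Rmat kN.
have lt_k B : supp_le k B -> sigma k \notin B -> {in B, forall x, index x ord < k}%N.
  move=> B_le skB x xB; rewrite ltn_neqAle B_le // andbT index_sigmaP //.
  by apply: contraNneq skB => <-.
have A_le : supp_le k A by move=> x /A_lt.
case: (boolP (sigma k \in A)) => [skA | skA]; last first.
  have [J [uJ J_lt ->]] := IH A (ltnW kN) (lt_k A A_le skA).
  by exists J; split=> //; apply: sub_all J_lt => j /ltnW.
have [|J [uJ J_lt eJ]] := IH (symd A (Vm k)) (ltnW kN).
  apply: lt_k; last by rewrite in_symd skA sk.
  by move=> x; rewrite in_symd; case: (x \in A) (A_le x) => /= [-> // | _ /Vk_supp].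
exists (k :: J); split.
- by rewrite /= uJ andbT; apply/negP => /(allP J_lt); rewrite ltnn.
- by rewrite /= ltnSn; apply: sub_all J_lt => j /ltnW.
- by rewrite chain_sum_cons -eJ symdC symdK.
Qed.

(* The largest low among the nonzero columns occurs in exactly one of them,
   so it survives in the sum, and it lies above any unpaired [sigma_e]. *)
Lemma chain_sum_Rmat_above J e : uniq J -> all (fun j => j < N)%N J ->
  ~~ paired ord e -> (e < N)%N -> sigma e \in chain_sum Rm J ->
  exists2 m, (e < m < N)%N & sigma m \in chain_sum Rm J.
Proof.
move=> uJ J_lt e_unpaired eN.
set J' := [seq j <- J | Rm j != set0].
have count_J' x : count (fun j => x \in Rm j) J = count (fun j => x \in Rm j) J'.
  rewrite count_filter; apply: eq_count => j /=.
  by case: eqP => [-> | _]; rewrite ?inE ?andbT.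
have J'P j : j \in J' -> (j < N)%N /\ Rm j != set0.
  by rewrite mem_filter => /andP[-> /(allP J_lt)].
rewrite in_chain_sum count_J' => e_odd.
have /hasP[j jJ' e_in_j] : has (fun j => sigma e \in Rm j) J'.
  by rewrite has_count; case: count e_odd.
have J'0 : J' != [::] by case: (J') jJ'.
have [a aJ' max_a] := exists_argmax_seq (fun j => lowi (Rm j)) J'0.
have [aN Ra0] := J'P a aJ'.
set m := lowi (Rm a).
have mN : (m < N)%N by apply: lowi_lt_size (Rmat_sub_ord aN) Ra0.
exists m.
  have [jN _] := J'P j jJ'.
  rewrite mN andbT ltn_neqAle eq_sym lowi_Rmat_unpaired //=.
  by rewrite -(index_sigma eN) (leq_trans (index_le_lowi e_in_j)) ?max_a.
rewrite in_chain_sum count_J'.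
rewrite (eq_in_count (a2 := pred1 a)) ?count_uniq_mem ?filter_uniq ?aJ' //.
move=> i iJ' /=; case: eqVneq => [-> | ia].
  exact: sigma_lowi_in (Rmat_sub_ord aN) Ra0.
have [iN Ri0] := J'P i iJ'.
apply/negP => /index_le_lowi; rewrite index_sigma // => m_le.
by case/eqP: (lowi_Rmat_inj iN aN ia Ri0 Ra0); apply/eqP; rewrite eqn_leq max_a.
Qed.

Lemma mem_essential_idx p j : j \in essential_idx ord p ->
  (j < N)%N && ~~ paired ord j.
Proof. by rewrite mem_filter mem_iota add0n => /andP[/and3P[_ _ ->] /andP[_ ->]]. Qed.

(* [ess_cycle ord p i] is the column [V_{nth 0 E i}], and [E] is increasing. *)
Lemma chain_sum_ess_top p idx (e := nth 0 (essential_idx ord p) (last 0 idx)) :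
  sorted ltn idx -> idx != [::] ->
  all (fun i => i < size (essential_idx ord p))%N idx ->
  [/\ (e < N)%N, ~~ paired ord e, supp_le e (chain_sum (ess_cycle ord p) idx) &
      sigma e \in chain_sum (ess_cycle ord p) idx].
Proof.
set E := essential_idx ord p; move=> idx_sorted idx0 idx_lt.
have E_sorted : sorted ltn E.
  by apply: sorted_filter (iota_ltn_sorted 0 N) => ? ? ? /ltn_trans; apply.
have last_idx : last 0 idx \in idx.
  by rewrite -nth_last mem_nth // prednK // lt0n size_eq0.
have i_E i : i \in idx -> nth 0 E i \in E by move=> /(allP idx_lt); apply: mem_nth.
have i_lt_e i : i \in idx -> i != last 0 idx -> (nth 0 E i < e)%N.
  move=> i_idx i_last.
  apply: (sorted_ltn_nth ltn_trans) => //; rewrite ?inE ?(allP idx_lt) //.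
  by rewrite ltn_neqAle i_last leq_last_sorted.
have col_i i : i \in idx -> reduced_col Rm Vm (nth 0 E i).
  by move=> /i_E /mem_essential_idx /andP[iN _]; apply: reduced_Rmat.
have /andP[eN e_unpaired] := mem_essential_idx (i_E _ last_idx).
split=> // [x | ].
  rewrite in_chain_sum => x_odd.
  have /hasP[i i_idx x_in_i] : has (fun i => x \in ess_cycle ord p i) idx.
    by rewrite has_count; case: count x_odd.
  have [_ Vi _] := col_i i i_idx.
  apply: leq_trans (Vi x x_in_i) _.
  by case: (eqVneq i (last 0 idx)) => [-> // | /(i_lt_e i i_idx) /ltnW].
rewrite in_chain_sum (eq_in_count (a2 := pred1 (last 0 idx))).
  by rewrite count_uniq_mem ?last_idx // (sorted_uniq ltn_trans ltnn).
move=> i i_idx /=; case: eqVneq => [-> | i_last]; first by case: (col_i _ last_idx).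
have [_ Vi _] := col_i i i_idx.
by apply/negP => /Vi; rewrite index_sigma // leqNgt i_lt_e.
Qed.

End Reduction.

Section Radius.
Variables (R : rcfType) (d : nat) (V : finType) (pos : V -> 'rV[R]_d) (v : 'rV[R]_d).
Variables (K : {set {set V}}) (ord : seq {set V}).
Hypothesis ord_valid : valid_order pos v K ord.
Local Open Scope ring_scope.
Local Notation N := (size ord).
Local Notation sigma := (sigma ord).

Lemma rsimp_index_mono a b : a \in ord -> b \in ord ->
  (index a ord <= index b ord)%N -> rsimp pos v a <= rsimp pos v b.
Proof.
case: ord_valid => _ _ ord_mono a_ord b_ord ab; rewrite leNgt; apply: contraTN ab.
by move=> lt_ba; rewrite -ltnNge ord_mono // lt_ba orbT.
Qed.

Lemma rsimp_ge0 s : 0 <= rsimp pos v s.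
Proof. exact: bigmax_ge_id. Qed.

Lemma rsimp_le_rchain e (A : {set {set V}}) y : (e < N)%N -> y \in ord ->
  y \in A -> (e <= index y ord)%N -> rsimp pos v (sigma e) <= rchain pos v A.
Proof.
case: ord_valid => ord_uniq _ _ eN y_ord yA ey.
apply: le_trans (le_bigmax_cond 0 (rsimp pos v) yA).
by apply: rsimp_index_mono; rewrite ?sigma_in ?index_sigma.
Qed.

Lemma rchain_top e (A : {set {set V}}) : (e < N)%N -> supp_le ord e A ->
  sigma e \in A -> rchain pos v A = rsimp pos v (sigma e).
Proof.
case: ord_valid => ord_uniq _ _ eN Ae se; apply: le_anti.
rewrite (rsimp_le_rchain eN (sigma_in eN) se) ?index_sigma // andbT.
apply: bigmax_le => [|x xA]; first exact: rsimp_ge0.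
rewrite rsimp_index_mono ?index_sigma ?Ae ?sigma_in //.
exact: supp_le_sub_ord eN Ae x xA.
Qed.

Hypothesis K_complex : is_complex K.

Lemma rsimp_le_rchain_bd e (Z b : {set {set V}}) : (e < N)%N -> ~~ paired ord e ->
  supp_le ord e Z -> sigma e \in Z -> {subset b <= ord} ->
  rsimp pos v (sigma e) <= rchain pos v (symd Z (bd b)).
Proof.
case: ord_valid => ord_uniq mem_ord _ eN e_unpaired Ze se b_ord.
have b_lt : {in b, forall x, index x ord < N}%N by move=> x /b_ord; rewrite index_mem.
have [J [uJ J_lt ->]] := Vmat_span K_complex ord_uniq mem_ord (leqnn N) b_lt.
rewrite bd_chain_sum (@eq_in_chain_sum _ _ _ (Rmat ord)); last first.
  by move=> j /(allP J_lt) jN; case: (reduced_Rmat K_complex ord_uniq mem_ord jN).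
case: (boolP (sigma e \in chain_sum (Rmat ord) J)) => [eX | eX]; last first.
  apply: (rsimp_le_rchain eN (sigma_in eN)); rewrite ?index_sigma //.
  by rewrite in_symd se (negPf eX).
have [m /andP[em mN] mX] :=
  chain_sum_Rmat_above K_complex ord_uniq mem_ord uJ J_lt e_unpaired eN eX.
apply: (rsimp_le_rchain eN (sigma_in mN)); last by rewrite index_sigma // ltnW.
rewrite in_symd mX addbT; apply/negP => /Ze.
by rewrite index_sigma // leqNgt em.
Qed.

End Radius.

Lemma rclass_eq (R : rcfType) (d : nat) (V : finType) (pos : V -> 'rV[R]_d)
    (v : 'rV[R]_d) (K : {set {set V}}) (p : nat) (z xi : {set {set V}}) (M : R) :
  (forall c : {set {set V}}, c \subset psimp K p.+1 ->
     (M <= rchain pos v (symd z (bd c)))%R) ->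
  xi \in hclass K p z -> rchain pos v xi = M -> rclass pos v K p z = M.
Proof.
move=> class_ge xi_class rxi; apply: le_anti.
rewrite -{1}rxi (bigmin_le_cond _ (rchain pos v) xi_class) /=.
apply: le_bigmin => [|xi'].
  by have := class_ge set0 (sub0set _); rewrite bd0 symd0.
by rewrite inE => /existsP[c /andP[c_sub /eqP ->]]; apply: class_ge.
Qed.

(* The representative [Z] attains the bound by itself. *)
Theorem mainTheorem1 (R : rcfType) (d : nat) (V : finType)
    (pos : V -> 'rV[R]_d) (K : {set {set V}}) (v : 'rV[R]_d)
    (ord : seq {set V}) (p : nat) (zeta c : {set {set V}}) (idx : seq nat) :
  injective pos ->
  is_complex K ->
  valid_order pos v K ord ->
  zeta \subset psimp K p ->
  bd zeta = set0 ->
  ~ (exists b : {set {set V}}, b \subset psimp K p.+1 /\ bd b = zeta) ->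
  sorted ltn idx -> idx != [::] ->
  all (fun i => i < size (essential_idx ord p)) idx ->
  c \subset psimp K p.+1 ->
  zeta = symd (foldr (@symd V) set0 [seq ess_cycle ord p i | i <- idx]) (bd c) ->
  rclass pos v K p zeta = rchain pos v (ess_cycle ord p (last 0 idx)) /\
  rchain pos v (foldr (@symd V) set0 [seq ess_cycle ord p i | i <- idx])
    = rclass pos v K p zeta.
Proof.
move=> _ K_complex ord_valid _ _ _ idx_sorted idx0 idx_lt c_sub ->.
case: (ord_valid) => ord_uniq mem_ord _.
rewrite -/(chain_sum (ess_cycle ord p) idx); set Z := chain_sum _ idx.
have [eN e_unpaired Ze se] :=
  chain_sum_ess_top K_complex ord_uniq mem_ord idx_sorted idx0 idx_lt.
set e := nth 0 _ (last 0 idx) in eN e_unpaired Ze se.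
have [_ Ve se_last] := reduced_Rmat K_complex ord_uniq mem_ord eN.
have chain_ord (b : {set {set V}}) : b \subset psimp K p.+1 -> {subset b <= ord}.
  by move=> /subsetP b_sub x /b_sub; rewrite inE mem_ord => /andP[].
have rZ := rchain_top ord_valid eN Ze se.
have rZ_class : rclass pos v K p (symd Z (bd c)) = rsimp pos v (sigma ord e).
  apply: (rclass_eq (xi := Z)) rZ => [c' c'_sub |]; last first.
    by rewrite inE; apply/existsP; exists c; rewrite c_sub symdK eqxx.
  rewrite -symdA -bd_symd; apply: (rsimp_le_rchain_bd ord_valid K_complex) => // x.
  rewrite in_symd; case: (boolP (x \in c)) => [/(chain_ord _ c_sub) // | _ /=].
  exact: chain_ord c'_sub x.
by rewrite rZ_class (rchain_top ord_valid eN Ve se_last) rZ.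
Qed.
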